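(* Let $\mu$ be a probability measure and $\omega\ge0$ a weight with $\int\omega\,d\mu<\infty$. Assume there is $C>0$ such that $\inf_c\int|g-c|\,\omega\,d\mu\le C\int\sqrt{\Gamma(g)}\,d\mu$ for all $g\in\mathcal A$. Let $G(s)=\inf\{u:\mu(\omega\le u)>s\}$ for $s\in(0,1)$. Then for all $s\in(0,1)$ with $G(s)>0$ and all $g\in\mathcal A$, $$\inf_{c\in\mathbb R}\int|g-c|\,d\mu\le\frac{C}{G(s)}\int\sqrt{\Gamma(g)}\,d\mu+s\,\mathrm{Osc}_\mu(g),$$ where $\mathrm{Osc}_\mu(g)=\operatorname{ess\,sup}g-\operatorname{ess\,inf}g$.
   Context: Standing framework: $E$ Polish, $\mu$ a probability measure on $E$, $L$ a $\mu$-symmetric diffusion operator with an algebra $\mathcal A$ of bounded functions and carré du champ $\Gamma(f)=\Gamma(f,f)=\frac12(L(f^2)-2fLf)\ge0$. (Model case $E=\mathbb R^n$, $\Gamma(f)=|\nabla f|^2$.) *)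

From HB Require Import structures.
From mathcomp Require Import all_boot all_order all_algebra.
From mathcomp Require Import all_classical all_reals all_analysis ess_sup_inf.
Set Implicit Arguments. Unset Strict Implicit. Unset Printing Implicit Defensive.
Import Order.TTheory GRing.Theory Num.Theory.
Local Open Scope classical_set_scope.
Local Open Scope ring_scope.

Definition Osc d (T : measurableType d) (R : realType)
  (mu : {measure set T -> \bar R}) (g : T -> R) : \bar R :=
  (ess_sup mu (EFin \o g) - ess_inf mu (EFin \o g))%E.

Definition Gquant d (T : measurableType d) (R : realType)
  (mu : {measure set T -> \bar R}) (w : T -> R) (s : R) : R :=
  inf [set u : R | (s%:E < mu [set x | (w x <= u)%R])%E].

Definition wdev d (T : measurableType d) (R : realType)
  (mu : {measure set T -> \bar R}) (w g : T -> R) : \bar R :=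
  ereal_inf [set (\int[mu]_x (`|g x - c| * w x)%:E)%E | c in [set: R]].

(* Fix c and u < G(s), so that mu(w <= u) <= s, and clamp c to c' in
   [ess inf g, ess sup g]. Off {w <= u} we have |g - c'| <= |g - c| w / u,
   and on {w <= u} we have |g - c'| <= Osc(g); integrating gives
   int |g - c'| <= u^-1 int |g - c| w + s Osc(g). Letting u increase to G(s)
   and then taking the infimum over c turns the weighted Poincare inequality
   into the unweighted one. *)

From HB Require Import structures.
From mathcomp Require Import all_boot all_order all_algebra.
From mathcomp Require Import all_classical all_reals all_analysis ess_sup_inf.
From mathcomp Require Import unstable measurable_realfun lra.
Set Implicit Arguments. Unset Strict Implicit. Unset Printing Implicit Defensive.
Import Order.TTheory GRing.Theory Num.Theory.
Local Open Scope classical_set_scope.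
Local Open Scope ring_scope.

Definition clamp {R : realDomainType} (m M c : R) : R := Num.max m (Num.min M c).

Lemma clamp_dist {R : realDomainType} (m M c a : R) : m <= a <= M ->
  `|a - clamp m M c| <= `|a - c| /\ `|a - clamp m M c| <= M - m.
Proof.
move=> /andP[ma aM]; rewrite /clamp.
have [Mc|cM] := leP M c.
  rewrite max_r ?(le_trans ma aM) // !ler0_norm ?subr_le0 ?(le_trans aM) //.
  by split; lra.
have [mc|cm] := leP m c.
  by split => //; rewrite ler_norml; apply/andP; split; lra.
by rewrite !ger0_norm ?subr_ge0 ?(le_trans (ltW cm)) //; split; lra.
Qed.

Lemma clamp_dist_weighted {R : realFieldType} (m M c a v u : R) :
  m <= a <= M -> 0 < u -> 0 <= v ->
  `|a - clamp m M c| <= u^-1 * (`|a - c| * v) + (M - m) * (v <= u)%R%:R.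
Proof.
move=> maM u0 v0; have [dc dM] := clamp_dist c maM.
have [vu|uv] := leP v u.
  rewrite mulr1 (le_trans dM) // lerDr.
  by rewrite mulr_ge0 // ?invr_ge0 ?mulr_ge0 // ltW.
rewrite mulr0 addr0 (le_trans dc) // mulrCA ler_peMr // ler_pdivlMl // mulr1.
exact: ltW.
Qed.

Lemma lee_mull_lt_limit (R : realType) (x y : \bar R) (G : R) : 0 < G -> (0 <= y)%E ->
  (forall u, 0 < u < G -> (u%:E * x <= y)%E) -> (G%:E * x <= y)%E.
Proof.
move=> G0 y0 hu; case: x hu => [r| |] hu.
- case: y y0 hu => [t| |] //= t0 hu; last by rewrite leey.
  rewrite lee_fin in t0; rewrite -EFinM lee_fin; have [r0|r0] := leP r 0.
    by rewrite (le_trans _ t0) // mulr_ge0_le0 // ltW.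
  rewrite -ler_pdivlMr //; apply/ler_ltP => u uG.
  have [u0|u0] := leP u 0; first by rewrite (le_trans u0) // divr_ge0 // ltW.
  by rewrite ler_pdivlMr // -lee_fin EFinM hu // u0.
- have := hu (G / 2); rewrite !gt0_muley ?lte_fin ?divr_gt0 //.
  by apply; apply/andP; split; lra.
- by rewrite gt0_muleNy ?lte_fin // leNye.
Qed.

Section clamped_deviation.
Context d (T : measurableType d) (R : realType).
Variable mu : {measure set T -> \bar R}.

Lemma ess_range_bounded (g : T -> R) (K : R) :
  (0 < mu setT)%E -> (forall x, `|g x| <= K) ->
  exists m M : R, [/\ Osc mu g = (M - m)%:E, m <= M &
                      \forall x \ae mu, m <= g x <= M].
Proof.
move=> mu0 gK; set i := ess_inf mu (EFin \o g); set S := ess_sup mu (EFin \o g).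
have gK' x : - K <= g x <= K by rewrite -ler_norml.
have ae_proper := ae_properfilter_algebraOfSetsType mu0.
have ae_iS : \forall x \ae mu, (i <= (g x)%:E <= S)%E.
  apply: filterS2 (ess_inf_le mu (EFin \o g)) (ess_sup_ge mu (EFin \o g)).
  by move=> x /= -> ->.
have [x /andP[ix xS]] := filter_ex ae_iS.
have i_fin : i \is a fin_num.
  rewrite fin_numElt (lt_le_trans (ltNyr (- K))) ?(le_lt_trans ix) ?ltry //.
  by apply: ess_inf_ler => y; rewrite lee_fin; case/andP: (gK' y).
have S_fin : S \is a fin_num.
  rewrite fin_numElt (lt_le_trans (ltNyr (g x))) ?(le_lt_trans _ (ltry K)) //.
  by apply: ess_sup_ler => y; rewrite lee_fin; case/andP: (gK' y).
exists (fine i), (fine S); split.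
- by rewrite /Osc -/i -/S EFinB !fineK.
- by rewrite -lee_fin !fineK // (le_trans ix xS).
- by apply: filterS ae_iS => y; rewrite -!lee_fin !fineK.
Qed.

Lemma measurable_sublevel (w : T -> R) (u : R) : measurable_fun setT w ->
  measurable [set x | w x <= u].
Proof.
by move=> wm; rewrite -[X in measurable X]setTI; apply: measurable_fun_le.
Qed.

Lemma sublevel_measure_le_Gquant (w : T -> R) (s u : R) :
  (forall x, 0 <= w x) -> 0 <= s -> u < Gquant mu w s ->
  (mu [set x | (w x <= u)%R] <= s%:E)%E.
Proof.
move=> w0 s0 uG; rewrite leNgt; apply/negP => su.
suff : Gquant mu w s <= u by rewrite leNgt uG.
apply: ge_inf => //; exists 0 => v /=; apply: contraPP => /negP; rewrite -ltNge.
move=> v0; suff -> : [set x | w x <= v] = set0 by rewrite measure0 lte_fin ltNge s0.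
by apply/seteqP; split => x //= wv; have := w0 x; lra.
Qed.

Lemma measurable_weighted_dist (g w : T -> R) (c : R) :
  measurable_fun setT g -> measurable_fun setT w ->
  measurable_fun setT (fun x => (`|g x - c| * w x)%:E).
Proof.
move=> gm wm; apply/measurable_EFinP; apply: measurable_funM => //.
exact/measurableT_comp/measurable_funB.
Qed.

Lemma wdev1_le_sublevel (g w : T -> R) (m M c u : R) :
  measurable_fun setT g -> measurable_fun setT w -> (forall x, 0 <= w x) ->
  m <= M -> (\forall x \ae mu, m <= g x <= M) -> 0 < u ->
  (wdev mu (fun _ => 1%R) g <=
     (u^-1)%:E * \int[mu]_x (`|g x - c| * w x)%:E
     + (M - m)%:E * mu [set x | (w x <= u)%R])%E.
Proof.
move=> gm wm w0 mM gmM u0; set D := [set x | (w x <= u)%R].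
have Dm : measurable D by exact: measurable_sublevel.
have Mm0 : (0 <= (M - m)%:E)%E by rewrite lee_fin subr_ge0.
have u0' : (0 <= (u^-1)%:E)%E by rewrite lee_fin invr_ge0 ltW.
have indm : measurable_fun setT (fun x => (\1_D x : R)%:E).
  exact/measurable_EFinP/measurable_indic.
apply: (@le_trans _ _ (\int[mu]_x (`|g x - clamp m M c| * 1)%:E)%E).
  by apply: ereal_inf_lbound; exists (clamp m M c).
apply: (@le_trans _ _ (\int[mu]_x ((u^-1)%:E * (`|g x - c| * w x)%:E
                                  + (M - m)%:E * (\1_D x)%:E))%E).
  apply: ae_ge0_le_integral => //.
  - exact: measurable_weighted_dist _ gm (measurable_cst _).
  - by move=> x _; rewrite adde_ge0 // mule_ge0 // lee_fin ?mulr_ge0.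
  - by apply: emeasurable_funD; apply: emeasurable_funM => //;
      exact: measurable_weighted_dist.
  - apply: filterS gmM => x gx _; rewrite mulr1 -!EFinM -EFinD lee_fin indicE.
    rewrite (_ : (x \in D) = (w x <= u)%R); first exact: clamp_dist_weighted.
    by apply/idP/idP => [/set_mem|/mem_set].
rewrite ge0_integralD //.
- rewrite ge0_integralZl //; last by move=> x _; rewrite lee_fin mulr_ge0.
    by rewrite ge0_integralZl // integral_indic // setIT.
  exact: measurable_weighted_dist.
- by move=> x _; rewrite mule_ge0 // lee_fin mulr_ge0.
- by apply: emeasurable_funM => //; exact: measurable_weighted_dist.
- by move=> x _; rewrite mule_ge0 // lee_fin.
- exact: emeasurable_funM.
Qed.

End clamped_deviation.

Theorem mainTheorem11 (d : measure_display) (T : measurableType d) (R : realType)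
  (mu : probability T R)
  (A : set (T -> R)) (Gamma : (T -> R) -> T -> R)
  (hA : forall g, A g -> measurable_fun setT g /\ exists M : R, forall x, `|g x| <= M)
  (hGamma : forall g, A g -> measurable_fun setT (Gamma g) /\ forall x, 0 <= Gamma g x)
  (w : T -> R) (hwm : measurable_fun setT w) (hw0 : forall x, 0 <= w x)
  (hwint : (\int[mu]_x (w x)%:E < +oo)%E)
  (C : R) (hC : 0 < C)
  (hyp : forall g, A g ->
     (wdev mu w g <= C%:E * \int[mu]_x (Num.sqrt (Gamma g x))%:E)%E) :
  forall s : R, 0 < s -> s < 1 -> 0 < Gquant mu w s ->
  forall g, A g ->
    (wdev mu (fun _ => 1%R) g <=
       (C / Gquant mu w s)%:E * \int[mu]_x (Num.sqrt (Gamma g x))%:E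
       + s%:E * Osc mu g)%E.
Proof.
move=> s s0 _ G0 g Ag; have [gm [K gK]] := hA g Ag.
have mu0 : (0 < mu setT)%E by rewrite probability_setT lte01.
have [m [M [-> mM gmM]]] := ess_range_bounded mu0 gK.
set Gs := Gquant mu w s in G0 *; set X := wdev mu (fun _ => 1%R) g.
have dev_le c :
    (Gs%:E * (X - (s * (M - m))%:E) <= \int[mu]_x (`|g x - c| * w x)%:E)%E.
  apply: lee_mull_lt_limit => // [|u /andP[u0 uG]].
    by apply: integral_ge0 => x _; rewrite lee_fin mulr_ge0.
  rewrite -lee_pdivlMl // leeBlDr //.
  apply: le_trans (wdev1_le_sublevel c gm hwm hw0 mM gmM u0) _.
  rewrite leeD2l // EFinM muleC lee_wpmul2r ?lee_fin ?subr_ge0 //.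
  exact: sublevel_measure_le_Gquant hw0 (ltW s0) uG.
have : (Gs%:E * (X - (s * (M - m))%:E)
          <= C%:E * \int[mu]_x (Num.sqrt (Gamma g x))%:E)%E.
  by apply: le_trans (hyp g Ag); apply: le_ereal_inf_tmp => _ [c _ <-]; exact: dev_le.
by rewrite -lee_pdivlMl // leeBlDr // muleA -EFinM mulrC EFinM.
Qed.
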